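(* Let $(E,\pi,M)$ be a bundle with connection $\Delta^h$, let $\{u^I\}$ be bundle coordinates on an open set $W\subseteq E$, let $\{X_I\}$ be the frame adapted to $\{\partial/\partial u^I\}$ and $\Gamma_\mu^a$ the coefficients of $\Delta^h$ in it. Let $V\subseteq W$ be open and $U\subseteq V$, and suppose the normal coordinates equation $$\Big(\frac{\partial\tilde u^a}{\partial u^b}\Gamma_\mu^b+\frac{\partial\tilde u^a}{\partial u^\mu}\Big)\Big|_U=0$$ has solutions. Then all frames $\{\tilde X_I\}$ normal on $U$ and adapted to (the coordinate frames of) local bundle coordinates defined on $V$ are described by $$\tilde X_\mu|_U=(A_\mu^\nu X_\nu)|_U=\frac{\partial}{\partial\tilde u^\mu}\Big|_U,\qquad \tilde X_a|_U=(A_a^bX_b)|_U=\frac{\partial}{\partial\tilde u^a}\Big|_U,$$ where $\{\tilde u^I\}$ are bundle coordinates with domain $V$ whose fibre components $\tilde u^a$ are solutions of the normal coordinates equation above, $\{\tilde X_I\}$ is the frame adapted to $\{\partial/\partial\tilde u^I\}$, and $A_I^J=\partial u^J/\partial\tilde u^I$.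
   Context: $\dim M=n$, fibre dimension $r$; indices $\mu,\nu$ over $1,\dots,n$, $a,b$ over $n+1,\dots,n+r$, $I,J$ over $1,\dots,n+r$; summation convention. Bundle coordinates on open $U\subseteq E$: coordinates $\{u^I\}$ with $u^\mu=x^\mu\circ\pi$ for coordinates $\{x^\mu\}$ on $\pi(U)$; admissible changes have $\tilde u^\mu$ depending only on $u^1,\dots,u^n$. Vertical distribution $\Delta^v_p=T_p(\pi^{-1}(\pi(p)))$; a connection is an $n$-dimensional distribution $\Delta^h$ with $\Delta^v_p\oplus\Delta^h_p=T_p(E)$. The frame adapted to $\{e_I\}$ (with $\{e_a\}$ a basis of $\Delta^v$) is $X_\mu=(\pi_*|_{\Delta^h})^{-1}\pi_*(e_\mu)$, $X_a=e_a$; then $X_\mu=e_\mu+\Gamma_\mu^be_b$ defines the coefficients $\Gamma_\mu^a$. An adapted frame is normal on $U$ if its coefficients vanish on $U$. *)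

(* Everything is expressed in the bundle chart
   {u^I} on W: W is identified with the open set Wc = u(W) of R^(n+r)
   (row vectors 'rV[R]_(n+r)); first n coordinates = base coordinates u^mu,
   last r coordinates = fibre coordinates u^a. *)
From HB Require Import structures.
From mathcomp Require Import all_boot all_order all_algebra.
From mathcomp Require Import all_classical all_reals all_analysis.
Set Implicit Arguments. Unset Strict Implicit. Unset Printing Implicit Defensive.
Import Order.TTheory GRing.Theory Num.Theory.
Import numFieldNormedType.Exports.
Local Open Scope classical_set_scope.
Local Open Scope ring_scope.

(* standard basis vector e_I = d/du^I (in u-components) *)
Definition ebas (R : realType) (k : nat) (I : 'I_k) : 'rV[R]_k := delta_mx 0 I.

Fixpoint iterD (R : realType) (V W : normedModType R) (vs : seq V) (f : V -> W)
  : V -> W :=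
  match vs with
  | [::] => f
  | v :: vs' => (fun x => 'D_v (iterD vs' f) x)
  end.

Definition smooth_on (R : realType) (V W : normedModType R) (A : set V) (f : V -> W) :=
  forall (vs : seq V) (p : V), A p -> differentiable (iterD vs f) p.

(* Jacobian: (jac f p) I J = d f^J / d u^I at p *)
Definition jac (R : realType) (k : nat) (f : 'rV[R]_k -> 'rV[R]_k) (p : 'rV[R]_k)
  : 'M[R]_k := \matrix_(I, J) ('D_(ebas R I) f p) 0 J.

(* bundle coordinates {ut^I} with domain V, expressed through the u-chart:
   a diffeomorphism of V onto an open set whose base components ut^mu are
   x~^mu o pi for coordinates x~ on pi(V), i.e. they depend only (and
   injectively) on u^1..u^n. *)
Definition bundle_coords (R : realType) (n r : nat) (V : set 'rV[R]_(n + r))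
    (ut : 'rV[R]_(n + r) -> 'rV[R]_(n + r)) : Prop :=
  [/\ open V, smooth_on V ut,
      (forall p q, V p -> V q -> ut p = ut q -> p = q) /\ open (ut @` V),
      (exists g : 'rV[R]_(n + r) -> 'rV[R]_(n + r),
          smooth_on (ut @` V) g /\ forall p, V p -> g (ut p) = p)
    & (forall p q, V p -> V q ->
         (lsubmx (ut p) = lsubmx (ut q) <-> lsubmx p = lsubmx q))].

(* A_I^J = d u^J / d ut^I = (inverse Jacobian) I J *)
Definition Amx (R : realType) (k : nat) (ut : 'rV[R]_k -> 'rV[R]_k) (p : 'rV[R]_k)
  : 'M[R]_k := invmx (jac ut p).

(* coordinate frame {d/dut^I} in u-components: d/dut^I = A_I^J d/du^J *)
Definition coord_frame (R : realType) (k : nat) (ut : 'rV[R]_k -> 'rV[R]_k)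
  (p : 'rV[R]_k) (I : 'I_k) : 'rV[R]_k := row I (Amx ut p).

Definition u_frame (R : realType) (k : nat) (p : 'rV[R]_k) (I : 'I_k) : 'rV[R]_k :=
  ebas R I.

Definition vertmx (R : realType) (n r : nat) : 'M[R]_(n + r) :=
  \matrix_(I, J) ((I == J) && (n <= I)%N)%:R.

(* a connection on W: an n-dimensional distribution (row space of H p)
   complementary to the vertical one *)
Definition is_connection (R : realType) (n r : nat) (Wc : set 'rV[R]_(n + r))
    (H : 'rV[R]_(n + r) -> 'M[R]_(n + r)) : Prop :=
  forall p, Wc p -> \rank (H p) = n /\ (H p + vertmx R n r :=: 1%:M)%MS.

(* X is the frame adapted to the frame F (whose e_a span the vertical
   distribution) on D: X_mu is the unique horizontal vector with
   pi_* X_mu = pi_* e_mu (pi_* = first n components), X_a = e_a *)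
Definition adapted_frame (R : realType) (n r : nat) (D : set 'rV[R]_(n + r))
    (H : 'rV[R]_(n + r) -> 'M[R]_(n + r))
    (F X : 'rV[R]_(n + r) -> 'I_(n + r) -> 'rV[R]_(n + r)) : Prop :=
  forall p, D p ->
    (forall mu : 'I_n, (X p (lshift r mu) <= H p)%MS /\
        lsubmx (X p (lshift r mu)) = lsubmx (F p (lshift r mu))) /\
    (forall a : 'I_r, X p (rshift n a) = F p (rshift n a)).

(* coefficients Gamma_mu^a: X_mu = e_mu + Gamma_mu^b e_b, i.e. the a-th
   fibre component of X_mu in the basis {e_I} *)
Definition coefs (R : realType) (n r : nat)
    (F X : 'rV[R]_(n + r) -> 'I_(n + r) -> 'rV[R]_(n + r))
    (p : 'rV[R]_(n + r)) (mu : 'I_n) (a : 'I_r) : R :=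
  (X p (lshift r mu) *m invmx (\matrix_(I < n + r) F p I)) 0 (rshift n a).

Definition normal_on (R : realType) (n r : nat) (U : set 'rV[R]_(n + r))
    (F X : 'rV[R]_(n + r) -> 'I_(n + r) -> 'rV[R]_(n + r)) : Prop :=
  forall p, U p -> forall mu a, coefs F X p mu a = 0.

Definition nce (R : realType) (n r : nat)
    (Gamma : 'rV[R]_(n + r) -> 'I_n -> 'I_r -> R)
    (ut : 'rV[R]_(n + r) -> 'rV[R]_(n + r)) (U : set 'rV[R]_(n + r)) : Prop :=
  forall p, U p -> forall (mu : 'I_n) (a : 'I_r),
    \sum_(b < r) jac ut p (rshift n b) (rshift n a) * Gamma p mu b
    + jac ut p (lshift r mu) (rshift n a) = 0.

(* Fix a point p and let J = (d ut^J / d u^I) be the Jacobian of the new chart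
   in the old one.  Since the base coordinates ut^mu depend only on the u^nu,
   the block d ut^mu / d u^a vanishes, so J and A = J^-1 are block upper
   triangular and the diagonal block A_ul is invertible.  The horizontal
   vectors X_mu = e_mu + Gamma_mu^b e_b are the rows of a matrix
   Y = (1 | Gamma) ([hframe_mx X p]) spanning the n-dimensional horizontal
   space, so a horizontal vector is determined by its base part:
   Xt_mu = A_mu^nu X_nu.  The coefficients of Xt in {d/dut^I} are the fibre
   components of Xt_mu J, i.e. A_ul times the fibre part of Y J, and the
   latter is the left-hand side of the normal coordinates equation; hence Xt
   is normal iff ut solves it.  Then Xt_mu J and (d/dut^mu) J have the same
   base and fibre parts, so Xt_mu = d/dut^mu, while
   Xt_a = d/dut^a = A_a^b X_b because A_a^nu = 0. *)

From HB Require Import structures.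
From mathcomp Require Import all_boot all_order all_algebra.
From mathcomp Require Import all_classical all_reals all_analysis.
Import Order.TTheory GRing.Theory Num.Theory.
Import numFieldNormedType.Exports.
Local Open Scope classical_set_scope.
Local Open Scope ring_scope.
Set Implicit Arguments. Unset Strict Implicit. Unset Printing Implicit Defensive.

Lemma lsubmx_mul_upper (R : pzSemiRingType) (m n r k : nat)
    (v : 'M[R]_(m, n + r)) (J : 'M[R]_(n + r, n + k)) :
  dlsubmx J = 0 -> lsubmx (v *m J) = lsubmx v *m ulsubmx J.
Proof.
move=> dlJ0; rewrite -{1}[v]hsubmxK -{1}[J]submxK mul_row_block dlJ0.
by rewrite mulmx0 addr0 row_mxKl.
Qed.

Section BlockUpperTriangular.
Variables (R : comUnitRingType) (n r : nat) (J : 'M[R]_(n + r)).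
Hypotheses (unitJ : J \in unitmx) (dlJ0 : dlsubmx J = 0).

Let invmx_blocks :
  ulsubmx (invmx J) *m ulsubmx J = 1%:M /\ dlsubmx (invmx J) *m ulsubmx J = 0.
Proof.
have : block_mx (ulsubmx (invmx J)) (ursubmx (invmx J))
                (dlsubmx (invmx J)) (drsubmx (invmx J))
       *m block_mx (ulsubmx J) (ursubmx J) 0 (drsubmx J) = 1%:M.
  by rewrite -dlJ0 !submxK mulVmx.
rewrite mulmx_block (scalar_mx_block n r) => /eq_block_mx[ul _ dl _].
by rewrite !mulmx0 !addr0 in ul dl.
Qed.

Lemma ulsubmx_invmx_unit : ulsubmx (invmx J) \in unitmx.
Proof. by case: (mulmx1_unit invmx_blocks.1). Qed.

Lemma dlsubmx_invmx : dlsubmx (invmx J) = 0.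
Proof.
have [ul dl] := invmx_blocks.
by rewrite -[dlsubmx _]mulmx1 -(mulmx1C ul) mulmxA dl mul0mx.
Qed.

Lemma mulmx_upper_inj (m : nat) (v w : 'M[R]_(m, n + r)) :
  lsubmx v = lsubmx w -> rsubmx (v *m J) = rsubmx (w *m J) -> v = w.
Proof.
move=> lvw rvw; rewrite -(mulmxK unitJ v) -(mulmxK unitJ w); congr (_ *m _).
by rewrite -[v *m J]hsubmxK -[w *m J]hsubmxK !lsubmx_mul_upper // lvw rvw.
Qed.

End BlockUpperTriangular.

Section GraphRowSpace.
Variables (F : fieldType) (n r : nat) (Y : 'M[F]_(n, n + r)).
Hypothesis lsubY : lsubmx Y = 1%:M.

Lemma rank_graph : \rank Y = n.
Proof.
apply/eqP; rewrite eqn_leq rank_leq_row -{1}(mxrank1 F n) -lsubY.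
by rewrite -[Y in lsubmx Y]mulmx1 -mulmx_lsub mxrankM_maxl.
Qed.

Lemma sub_graphE (m : nat) (v : 'M[F]_(m, n + r)) :
  (v <= Y)%MS -> v = lsubmx v *m Y.
Proof. by case/submxP=> c ->; rewrite -mulmx_lsub lsubY mulmx1. Qed.

Lemma sub_graph_rankE (k m : nat) (H : 'M[F]_(k, n + r)) (v : 'M[F]_(m, n + r)) :
  (Y <= H)%MS -> \rank H = n -> (v <= H)%MS -> v = lsubmx v *m Y.
Proof.
move=> sYH rankH svH; apply: sub_graphE; apply: submx_trans svH _.
by rewrite -(mxrank_leqif_sup sYH) rank_graph rankH.
Qed.

End GraphRowSpace.

Lemma derive_eq0_along (R : numFieldType) (V W : normedModType R) (f : V -> W) (x v : V) :
  (\forall h \near 0, f (h *: v + x) = f x) -> 'D_v f x = 0.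
Proof.
move=> fx0; have fx : \forall h \near 0^', f (h *: v + x) = f x.
  exact: cvg_within fx0.
rewrite /derive; apply: lim_near_cst; first exact: norm_hausdorff.
by apply: filterS fx => h /= ->; rewrite subrr scaler0.
Qed.

Lemma derive_comp_linear (R : numFieldType) (U V W : normedModType R)
    (L : {linear V -> W}) (f : U -> V) (x v : U) :
  continuous L -> differentiable f x -> 'D_v (L \o f) x = L ('D_v f x).
Proof.
move=> cL df; have dL := linear_differentiable (f x) cL.
rewrite (deriveE _ (differentiable_comp df dL)) (deriveE _ df) diff_comp //.
by rewrite (diff_lin _ cL).
Qed.

Lemma jacobian_unit_of_left_inverse (R : numFieldType) (k : nat)
    (f g : 'rV[R]_k -> 'rV[R]_k) (p : 'rV[R]_k) :
  differentiable f p -> differentiable g (f p) -> (\forall q \near p, g (f q) = q) ->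
  'J f p \in unitmx.
Proof.
move=> df dg gfK.
have gfE : \forall q \near p, (g \o f) q = id q by [].
have dgf u : 'd g (f p) ('d f p u) = u.
  rewrite -[RHS](derive_id p u) -(near_eq_derive u gfE).
  rewrite (deriveE _ (differentiable_comp df dg)).
  exact: (esym (congr1 (fun L => L u) (diff_comp df dg))).
have JfJg : 'J f p *m 'J g (f p) = 1%:M.
  by apply/row_matrixP => i; rewrite !rowE mulmxA !mul_rV_lin1 /= dgf mulmx1.
have [unitJf _] := mulmx1_unit JfJg.
exact: unitJf.
Qed.

Lemma jac_jacobian (R : realType) (k : nat) (f : 'rV[R]_k -> 'rV[R]_k) (p : 'rV[R]_k) :
  differentiable f p -> jac f p = 'J f p.
Proof.
move=> df; apply/matrixP => i j.
by rewrite mxE deriveEjacobian // /ebas -rowE mxE.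
Qed.

Section BundleCoordinates.
Variables (R : realType) (n r : nat) (V : set 'rV[R]_(n + r)).
Variables (ut : 'rV[R]_(n + r) -> 'rV[R]_(n + r)) (p : 'rV[R]_(n + r)).
Hypotheses (bc : bundle_coords V ut) (Vp : V p).

Let nbhsV : \forall q \near p, V q.
Proof. by case: bc => oV *; apply: open_nbhs_nbhs. Qed.

Lemma bundle_coords_jac_unit : jac ut p \in unitmx.
Proof.
case: bc => _ sut _ [g [sg gK]] _.
rewrite jac_jacobian; last exact: (sut [::]).
apply: (@jacobian_unit_of_left_inverse _ _ _ g); first exact: (sut [::]).
  by apply: (sg [::]); exists p.
by apply: filterS nbhsV => q; exact: gK.
Qed.

Lemma bundle_coords_dlsubmx_jac : dlsubmx (jac ut p) = 0.
Proof.
case: bc => _ sut _ _ base_ut.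
apply/matrixP => a mu; rewrite !mxE.
set v := ebas R (rshift n a).
have lv : lsubmx v = 0 by apply/matrixP => i j; rewrite !mxE eq_lrshift andbF.
have near_line : \forall h \near 0, V (h *: v + p).
  apply: (near0Z v (P := fun x => V (x + p))).
  move: nbhsV; rewrite (near_shift 0 p) /=.
  by apply: filterS => z /=; rewrite subr0 addrC.
have := derive_comp_linear v (@continuous_lsubmx R 1 n r) (sut [::] p Vp).
rewrite derive_eq0_along => [/(congr1 (fun w : 'rV_n => w 0 mu))|].
  by rewrite !mxE.
apply: filterS near_line => h Vh /=; apply/base_ut => //.
by rewrite linearD linearZ /= lv scaler0 add0r.
Qed.

End BundleCoordinates.

Definition hframe_mx (R : realType) (n r : nat)
    (X : 'rV[R]_(n + r) -> 'I_(n + r) -> 'rV[R]_(n + r)) (p : 'rV[R]_(n + r))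
  : 'M[R]_(n, n + r) := \matrix_(mu < n) X p (lshift r mu).

Lemma coefs_u_frame (R : realType) (n r : nat)
    (X : 'rV[R]_(n + r) -> 'I_(n + r) -> 'rV[R]_(n + r)) p mu a :
  coefs (@u_frame R (n + r)) X p mu a = X p (lshift r mu) 0 (rshift n a).
Proof.
rewrite /coefs; have -> : \matrix_(I < n + r) u_frame p I = 1%:M.
  by apply/matrixP => i j; rewrite !mxE eq_sym.
by rewrite invmx1 mulmx1.
Qed.

Lemma coefs_coord_frame (R : realType) (n r : nat)
    (ut : 'rV[R]_(n + r) -> 'rV[R]_(n + r))
    (Xt : 'rV[R]_(n + r) -> 'I_(n + r) -> 'rV[R]_(n + r)) p mu a :
  coefs (coord_frame ut) Xt p mu a = (Xt p (lshift r mu) *m jac ut p) 0 (rshift n a).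
Proof.
rewrite /coefs; have -> : \matrix_(I < n + r) coord_frame ut p I = invmx (jac ut p).
  by apply/matrixP => i j; rewrite !mxE.
by rewrite invmxK.
Qed.

Section AdaptedFramesAtPoint.
Variables (R : realType) (n r : nat).
Local Notation rV := 'rV[R]_(n + r).
Variables (H : rV -> 'M[R]_(n + r)) (X Xt : rV -> 'I_(n + r) -> rV) (ut : rV -> rV).
Variables (W V : set rV) (p : rV).
Hypothesis rankH : \rank (H p) = n.
Hypotheses (adX : adapted_frame W H (@u_frame R (n + r)) X) (Wp : W p).
Hypotheses (adXt : adapted_frame V H (coord_frame ut) Xt) (Vp : V p).
Hypotheses (unitJ : jac ut p \in unitmx) (dlJ0 : dlsubmx (jac ut p) = 0).

Local Notation J := (jac ut p).
Local Notation A := (Amx ut p).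

Lemma lsubmx_hframe_u : lsubmx (hframe_mx X p) = 1%:M.
Proof.
have [adXl _] := adX Wp.
apply/matrixP => mu nu; have := congr1 (fun v : 'rV_n => v 0 nu) (adXl mu).2.
by rewrite !mxE eq_lshift => ->; rewrite eq_sym.
Qed.

Lemma hframe_coord_frameE : hframe_mx Xt p = ulsubmx A *m hframe_mx X p.
Proof.
have [[adXl _] [adXtl _]] := (adX Wp, adXt Vp).
have sXH : (hframe_mx X p <= H p)%MS.
  by apply/row_subP => mu; rewrite rowK; exact: (adXl mu).1.
apply/row_matrixP => mu; rewrite row_mul rowK.
have [sXtH lXt] := adXtl mu.
rewrite (sub_graph_rankE lsubmx_hframe_u sXH rankH sXtH) lXt.
by congr (_ *m _); apply/rowP => nu; rewrite !mxE.
Qed.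

Lemma nce_termE mu a :
  \sum_(b < r) J (rshift n b) (rshift n a) * coefs (@u_frame R (n + r)) X p mu b
    + J (lshift r mu) (rshift n a)
  = (X p (lshift r mu) *m J) 0 (rshift n a).
Proof.
have X_lshift nu : X p (lshift r mu) 0 (lshift r nu) = (mu == nu)%:R.
  by have /matrixP/(_ mu nu) := lsubmx_hframe_u; rewrite !mxE.
rewrite [RHS]mxE big_split_ord /= addrC; congr (_ + _).
  by apply: eq_bigr => b _; rewrite coefs_u_frame mulrC.
rewrite (bigD1 mu) //= big1 ?addr0 => [|nu /negbTE nu_mu].
  by rewrite X_lshift eqxx mul1r.
by rewrite X_lshift eq_sym nu_mu mul0r.
Qed.

Let rsubmx_hframe_eq0 (Y : rV -> 'I_(n + r) -> rV) :
  (forall mu a, (Y p (lshift r mu) *m J) 0 (rshift n a) = 0) <->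
  rsubmx (hframe_mx Y p *m J) = 0.
Proof.
have entryE mu a : (hframe_mx Y p *m J) mu (rshift n a)
                   = (Y p (lshift r mu) *m J) 0 (rshift n a).
  by rewrite !mxE; apply: eq_bigr => k _; rewrite mxE.
split=> [Y0 | /matrixP Y0 mu a].
  by apply/matrixP => mu a; rewrite [LHS]mxE [RHS]mxE entryE.
by have := Y0 mu a; rewrite [LHS]mxE [RHS]mxE entryE.
Qed.

Lemma normal_at_iff_nce_at :
  (forall mu a, coefs (coord_frame ut) Xt p mu a = 0) <->
  (forall mu a, \sum_(b < r) J (rshift n b) (rshift n a)
                  * coefs (@u_frame R (n + r)) X p mu b
                + J (lshift r mu) (rshift n a) = 0).
Proof.
have rsubXtE : rsubmx (hframe_mx Xt p *m J)
               = ulsubmx A *m rsubmx (hframe_mx X p *m J).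
  by rewrite hframe_coord_frameE -mulmxA mulmx_rsub.
have unitAul := ulsubmx_invmx_unit unitJ dlJ0.
have normalE : (forall mu a, coefs (coord_frame ut) Xt p mu a = 0) <->
                rsubmx (hframe_mx Xt p *m J) = 0.
  by rewrite -rsubmx_hframe_eq0; split=> N mu a; have := N mu a;
    rewrite coefs_coord_frame.
have nceE : (forall mu a, \sum_(b < r) J (rshift n b) (rshift n a)
                             * coefs (@u_frame R (n + r)) X p mu b
                           + J (lshift r mu) (rshift n a) = 0) <->
            rsubmx (hframe_mx X p *m J) = 0.
  by rewrite -rsubmx_hframe_eq0; split=> N mu a; have := N mu a; rewrite nce_termE.
split=> [/normalE | /nceE E0]; last by apply/normalE; rewrite rsubXtE E0 mulmx0.
rewrite rsubXtE => E0; apply/nceE.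
by rewrite -(mulKmx unitAul (rsubmx _)) E0 mulmx0.
Qed.

Lemma Xt_lshift_sum mu :
  Xt p (lshift r mu) = \sum_(nu < n) A (lshift r mu) (lshift r nu) *: X p (lshift r nu).
Proof.
have := congr1 (row mu) hframe_coord_frameE; rewrite rowK row_mul mulmx_sum_row => ->.
by apply: eq_bigr => nu _; rewrite rowK !mxE.
Qed.

Lemma Xt_lshift_normal mu :
  (forall a, coefs (coord_frame ut) Xt p mu a = 0) ->
  Xt p (lshift r mu) = coord_frame ut p (lshift r mu).
Proof.
move=> N; apply: (mulmx_upper_inj unitJ dlJ0); first exact: ((adXt Vp).1 mu).2.
have -> : coord_frame ut p (lshift r mu) *m J = row (lshift r mu) 1%:M.
  by rewrite -row_mul mulVmx.
apply/rowP => a; rewrite [LHS]mxE -coefs_coord_frame N.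
by rewrite !mxE eq_lrshift.
Qed.

Lemma Xt_rshift_sum a :
  Xt p (rshift n a) = \sum_(b < r) A (rshift n a) (rshift n b) *: X p (rshift n b).
Proof.
have [[_ adXr] [_ adXtr]] := (adX Wp, adXt Vp).
rewrite adXtr /coord_frame (row_sum_delta (row _ _)) big_split_ord /=.
rewrite big1 ?add0r => [|nu _].
  by apply: eq_bigr => b _; rewrite adXr mxE.
have := congr1 (fun M : 'M[R]_(r, n) => M a nu) (dlsubmx_invmx unitJ dlJ0).
by rewrite !mxE => ->; rewrite scale0r.
Qed.

End AdaptedFramesAtPoint.

Theorem proposition5p1 (R : realType) (n r : nat)
    (Wc : set 'rV[R]_(n + r)) (H : 'rV[R]_(n + r) -> 'M[R]_(n + r))
    (X : 'rV[R]_(n + r) -> 'I_(n + r) -> 'rV[R]_(n + r))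
    (V U : set 'rV[R]_(n + r)) :
  open Wc ->
  is_connection Wc H ->
  adapted_frame Wc H (@u_frame R (n + r)) X ->
  (forall I, smooth_on Wc (fun p => X p I)) ->
  open V -> V `<=` Wc -> U `<=` V ->
  (exists ut0, bundle_coords V ut0 /\ nce (coefs (@u_frame R (n + r)) X) ut0 U) ->
  forall (ut : 'rV[R]_(n + r) -> 'rV[R]_(n + r))
         (Xt : 'rV[R]_(n + r) -> 'I_(n + r) -> 'rV[R]_(n + r)),
    bundle_coords V ut ->
    adapted_frame V H (coord_frame ut) Xt ->
    (normal_on U (coord_frame ut) Xt <-> nce (coefs (@u_frame R (n + r)) X) ut U) /\
    (normal_on U (coord_frame ut) Xt ->
     forall p, U p ->
       (forall mu : 'I_n,
          Xt p (lshift r mu)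
            = \sum_(nu < n) Amx ut p (lshift r mu) (lshift r nu) *: X p (lshift r nu)
          /\ Xt p (lshift r mu) = coord_frame ut p (lshift r mu)) /\
       (forall a : 'I_r,
          Xt p (rshift n a)
            = \sum_(b < r) Amx ut p (rshift n a) (rshift n b) *: X p (rshift n b)
          /\ Xt p (rshift n a) = coord_frame ut p (rshift n a))).
Proof.
move=> _ conn adX _ _ VW UV _ ut Xt bc adXt.
have at_p p : U p -> [/\ \rank (H p) = n, Wc p, V p,
                        jac ut p \in unitmx & dlsubmx (jac ut p) = 0].
  move=> Up; have Vp := UV p Up; have Wp := VW p Vp; have [rk _] := conn p Wp.
  split=> //; first exact: bundle_coords_jac_unit bc Vp.
  exact: bundle_coords_dlsubmx_jac bc Vp.
split.
  split=> N p Up; have [rk Wp Vp uJ dl0] := at_p p Up;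
    apply/(normal_at_iff_nce_at rk adX Wp adXt Vp uJ dl0); exact: N.
move=> N p Up; have [rk Wp Vp uJ dl0] := at_p p Up.
split=> [mu | a]; split.
- exact: Xt_lshift_sum rk adX Wp adXt Vp mu.
- exact: Xt_lshift_normal adXt Vp uJ dl0 mu (N p Up mu).
- exact: Xt_rshift_sum adX Wp adXt Vp uJ dl0 a.
- exact: (adXt p Vp).2 a.
Qed.
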